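(* Let $z:[0,\infty)\to C$ be a strong solution of the differential inclusion $\dot z(t)\in S(z(t))$ with $0\notin S(z(0))$. Then there exists $T>0$ such that $$\varphi(z(T))<\sup_{t\in[0,T]}\varphi(z(t))\le\varphi(z(0)).$$
   Context: $H$ is a real Hilbert space with inner product $\langle\cdot,\cdot\rangle$ and norm $\|\cdot\|$. $C\subset H$ is nonempty, bounded, convex and closed; $N_C(u)=\{z:\langle z,w-u\rangle\le0\ \forall w\in C\}$. On an open convex set $U\supset C$, $j\in C^{1,1}_L(U)$ (continuously Fréchet differentiable with $L$-Lipschitz gradient). $\eta:H\to\mathbb R$ is proper, convex, lower semicontinuous with $\mathrm{dom}(\eta)=H$, locally Lipschitz and bounded below on $C$, and there is $L_\eta:H\to\mathbb R$, bounded on bounded sets, with $L_\eta(u)\ge\sup_{z:\eta(z)\le\eta(u)}\frac{\eta(u)-\eta(z)}{\|u-z\|}$ for all $u$; $\partial\eta$ is its convex subdifferential. $\varphi:=j+\eta$ and $S(u):=-\nabla j(u)-\partial\eta(u)-N_C(u)$ for $u\in C$. A strong solution of $\dot z\in S(z)$ is a function $z\in C([0,\infty),H)$ that is absolutely continuous on every compact interval $[a,b]\subset(0,\infty)$ and satisfies $\dot z(t)\in S(z(t))$ for a.e. $t$. *)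

From Stdlib Require Import Reals List.
Open Scope R_scope.

Record HilbertSpace := {
  hcar :> Type;
  hzero : hcar;
  hadd : hcar -> hcar -> hcar;
  hopp : hcar -> hcar;
  hscal : R -> hcar -> hcar;
  hinner : hcar -> hcar -> R;
  hadd_assoc : forall x y z, hadd x (hadd y z) = hadd (hadd x y) z;
  hadd_comm : forall x y, hadd x y = hadd y x;
  hadd_zero : forall x, hadd x hzero = x;
  hadd_opp : forall x, hadd x (hopp x) = hzero;
  hscal_assoc : forall a b x, hscal a (hscal b x) = hscal (a * b) x;
  hscal_one : forall x, hscal 1 x = x;
  hscal_distr_R : forall a b x, hscal (a + b) x = hadd (hscal a x) (hscal b x);
  hscal_distr_H : forall a x y, hscal a (hadd x y) = hadd (hscal a x) (hscal a y);
  hinner_sym : forall x y, hinner x y = hinner y x;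
  hinner_add_l : forall x y z, hinner (hadd x y) z = hinner x z + hinner y z;
  hinner_scal_l : forall a x y, hinner (hscal a x) y = a * hinner x y;
  hinner_pos : forall x, 0 <= hinner x x;
  hinner_def : forall x, hinner x x = 0 -> x = hzero;
  hcomplete : forall u : nat -> hcar,
    (forall eps, eps > 0 -> exists N, forall m n, (m >= N)%nat -> (n >= N)%nat ->
        sqrt (hinner (hadd (u m) (hopp (u n))) (hadd (u m) (hopp (u n)))) < eps) ->
    exists l, forall eps, eps > 0 -> exists N, forall n, (n >= N)%nat ->
        sqrt (hinner (hadd (u n) (hopp l)) (hadd (u n) (hopp l))) < eps
}.

Arguments hzero {h}.
Arguments hadd {h}.
Arguments hopp {h}.
Arguments hscal {h}.
Arguments hinner {h}.

Section Hdefs.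
Variable H : HilbertSpace.

Definition hsub (x y : H) : H := hadd x (hopp y).
Definition hnorm (x : H) : R := sqrt (hinner x x).

Definition nonempty (C : H -> Prop) : Prop := exists x, C x.
Definition hbounded (C : H -> Prop) : Prop := exists M, forall x, C x -> hnorm x <= M.
Definition hconvex (C : H -> Prop) : Prop :=
  forall x y lam, C x -> C y -> 0 <= lam <= 1 ->
    C (hadd (hscal lam x) (hscal (1 - lam) y)).
Definition hopen (U : H -> Prop) : Prop :=
  forall x, U x -> exists r, r > 0 /\ forall y, hnorm (hsub y x) < r -> U y.
Definition hclosed (C : H -> Prop) : Prop := hopen (fun x => ~ C x).

Definition normal_cone (C : H -> Prop) (u z : H) : Prop :=
  forall w, C w -> hinner z (hsub w u) <= 0.

(** g is the gradient of j on U (Fréchet derivative represented by g u via Riesz). *)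
Definition is_gradient_on (U : H -> Prop) (j : H -> R) (g : H -> H) : Prop :=
  forall u, U u -> forall eps, eps > 0 -> exists delta, delta > 0 /\
    forall h, hnorm h < delta ->
      Rabs (j (hadd u h) - j u - hinner (g u) h) <= eps * hnorm h.

Definition lipschitz_on (U : H -> Prop) (L : R) (g : H -> H) : Prop :=
  forall x y, U x -> U y -> hnorm (hsub (g x) (g y)) <= L * hnorm (hsub x y).

Definition C11 (U : H -> Prop) (L : R) (j : H -> R) (gj : H -> H) : Prop :=
  is_gradient_on U j gj /\ lipschitz_on U L gj.

(** Properties of eta (real-valued, hence proper with dom = H) *)
Definition convex_fun (f : H -> R) : Prop :=
  forall x y lam, 0 <= lam <= 1 ->
    f (hadd (hscal lam x) (hscal (1 - lam) y)) <= lam * f x + (1 - lam) * f y.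
Definition lsc (f : H -> R) : Prop :=
  forall x eps, eps > 0 -> exists delta, delta > 0 /\
    forall y, hnorm (hsub y x) < delta -> f x - eps < f y.
Definition locally_lipschitz (f : H -> R) : Prop :=
  forall x, exists r K, r > 0 /\ forall y1 y2,
    hnorm (hsub y1 x) < r -> hnorm (hsub y2 x) < r ->
    Rabs (f y1 - f y2) <= K * hnorm (hsub y1 y2).
Definition bounded_below_on (C : H -> Prop) (f : H -> R) : Prop :=
  exists m, forall x, C x -> m <= f x.
Definition bounded_on_bounded (f : H -> R) : Prop :=
  forall B, hbounded B -> exists M, forall x, B x -> Rabs (f x) <= M.
Definition slope_bound (eta Leta : H -> R) : Prop :=
  forall u z, eta z <= eta u -> z <> u ->
    (eta u - eta z) / hnorm (hsub u z) <= Leta u.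

Definition subdiff (f : H -> R) (u g : H) : Prop :=
  forall w, f u + hinner g (hsub w u) <= f w.

Definition S_set (C : H -> Prop) (gj : H -> H) (eta : H -> R) (u v : H) : Prop :=
  exists g n, subdiff eta u g /\ normal_cone C u n /\
    v = hsub (hsub (hopp (gj u)) g) n.

Definition continuous_on_Rplus (z : R -> H) : Prop :=
  forall t, 0 <= t -> forall eps, eps > 0 -> exists delta, delta > 0 /\
    forall s, 0 <= s -> Rabs (s - t) < delta -> hnorm (hsub (z s) (z t)) < eps.

(** chain a <= a1 <= b1 <= a2 <= b2 <= ... <= b : a finite family of
    non-overlapping subintervals [ai,bi] of [a,b] *)
Fixpoint intervals_in (a b : R) (l : list (R * R)) : Prop :=
  match l with
  | nil => a <= b
  | (ai, bi) :: l' => a <= ai /\ ai <= bi /\ intervals_in bi b l'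
  end.

Definition abs_continuous_on (z : R -> H) (a b : R) : Prop :=
  forall eps, eps > 0 -> exists delta, delta > 0 /\
    forall l : list (R * R), intervals_in a b l ->
      fold_right (fun p acc => (snd p - fst p) + acc) 0 l < delta ->
      fold_right (fun p acc => hnorm (hsub (z (snd p)) (z (fst p))) + acc) 0 l < eps.

Definition has_derivative_at (z : R -> H) (t : R) (v : H) : Prop :=
  forall eps, eps > 0 -> exists delta, delta > 0 /\
    forall h, h <> 0 -> Rabs h < delta ->
      hnorm (hsub (hscal (/ h) (hsub (z (t + h)) (z t))) v) < eps.

End Hdefs.

Definition null_set (N : R -> Prop) : Prop :=
  forall eps, eps > 0 -> exists a b : nat -> R,
    (forall n, a n <= b n) /\
    (forall n, sum_f_R0 (fun k => b k - a k) n <= eps) /\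
    (forall t, N t -> exists n, a n < t < b n).

Arguments hsub {H}.
Arguments hnorm {H}.
Arguments hinner {h}.

Definition strong_solution (H : HilbertSpace) (C : H -> Prop) (gj : H -> H)
    (eta : H -> R) (z : R -> H) : Prop :=
  continuous_on_Rplus H z /\
  (forall t, 0 <= t -> C (z t)) /\
  (forall a b, 0 < a -> a <= b -> abs_continuous_on H z a b) /\
  null_set (fun t => 0 <= t /\
     ~ (exists v, has_derivative_at H z t v /\ S_set H C gj eta (z t) v)).

(** Along a strong solution the energy [phi = j + eta] is Lipschitz on [C], and at almost every
    time the subgradient and normal-cone inequalities give the left-sided descent estimate
    [phi (z t) - phi (z (t - h)) <= - h |z'(t)|^2 + o(h)].  As [phi o z] is absolutely continuous,
    this makes [phi (z t) + 2 lam |z t - z a| - lam^2 t] nonincreasing for every [lam >= 0]: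
    [lam = 0] gives monotonicity of the energy, and [lam = |z b - z a| / (b - a)] shows that the
    energy can only be constant on an interval on which [z] is.  If the energy never dropped
    below [phi (z 0)], the solution would therefore be stationary, making [0] a velocity in
    [S (z 0)]. *)

From Stdlib Require Import Reals.
Open Scope R_scope.
From Stdlib Require Import Lra Lia Psatz List Classical.

Section HilbertAlgebra.
Variable H : HilbertSpace.
Implicit Types x y u w : H.

Lemma hadd_0l x : hadd hzero x = x.
Proof. rewrite hadd_comm; apply hadd_zero. Qed.

Lemma hadd_oppl x : hadd (hopp x) x = hzero.
Proof. rewrite hadd_comm; apply hadd_opp. Qed.

Lemma hsub_addK x y : hadd (hsub x y) y = x.
Proof. unfold hsub. rewrite <- hadd_assoc, hadd_oppl, hadd_zero. reflexivity. Qed.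

Lemma hadd_subK u x : hadd u (hsub x u) = x.
Proof. rewrite hadd_comm. apply hsub_addK. Qed.

Lemma hsub_trans x y w : hsub x w = hadd (hsub x y) (hsub y w).
Proof. unfold hsub. rewrite <- (hadd_assoc H x), (hadd_assoc H (hopp y)), hadd_oppl, hadd_0l. reflexivity. Qed.

Lemma hsubrr x : hsub x x = hzero.
Proof. apply hadd_opp. Qed.

Lemma hadd_idem_eq0 y : hadd y y = y -> y = hzero.
Proof.
  intro E. rewrite <- (hadd_opp H y). rewrite <- E at 2.
  rewrite <- hadd_assoc, hadd_opp, hadd_zero. reflexivity.
Qed.

Lemma hscal0 w : hscal 0 w = hzero.
Proof. apply hadd_idem_eq0. rewrite <- hscal_distr_R. f_equal; ring. Qed.

Lemma hscal_zero a : hscal a (@hzero H) = hzero.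
Proof. apply hadd_idem_eq0. rewrite <- hscal_distr_H, hadd_zero. reflexivity. Qed.

Lemma hinner_0l y : hinner hzero y = 0.
Proof. assert (E := hinner_add_l H hzero hzero y). rewrite hadd_zero in E. lra. Qed.

Lemma hinner_opp_l x y : hinner (hopp x) y = - hinner x y.
Proof. assert (E := hinner_add_l H x (hopp x) y). rewrite hadd_opp, hinner_0l in E. lra. Qed.

Lemma hinner_add_r x y w : hinner x (hadd y w) = hinner x y + hinner x w.
Proof. rewrite !(hinner_sym H x). apply hinner_add_l. Qed.

Lemma hinner_scal_r a x y : hinner x (hscal a y) = a * hinner x y.
Proof. rewrite !(hinner_sym H x). apply hinner_scal_l. Qed.

Lemma hinner_opp_r x y : hinner x (hopp y) = - hinner x y.
Proof. rewrite !(hinner_sym H x). apply hinner_opp_l. Qed.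

Lemma hinner_sub_l x y w : hinner (hsub x y) w = hinner x w - hinner y w.
Proof. unfold hsub. rewrite hinner_add_l, hinner_opp_l. ring. Qed.

Lemma hinner_sub_r x y w : hinner w (hsub x y) = hinner w x - hinner w y.
Proof. unfold hsub. rewrite hinner_add_r, hinner_opp_r. ring. Qed.

Lemma hinner_sub_sub x y :
  hinner (hsub x y) (hsub x y) = hinner x x - 2 * hinner x y + hinner y y.
Proof. rewrite !hinner_sub_l, !hinner_sub_r, (hinner_sym H y x). ring. Qed.

Lemma hnorm_ge0 x : 0 <= hnorm x.
Proof. apply sqrt_pos. Qed.

Lemma hnorm_sqr x : hnorm x * hnorm x = hinner x x.
Proof. apply sqrt_sqrt, hinner_pos. Qed.

Lemma hnorm_eq0 x : hnorm x = 0 -> x = hzero.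
Proof. intro E. apply hinner_def. rewrite <- hnorm_sqr, E. ring. Qed.

Lemma hnorm_zero : hnorm (@hzero H) = 0.
Proof. unfold hnorm. rewrite hinner_0l. apply sqrt_0. Qed.

Lemma hnorm_scal a x : hnorm (hscal a x) = Rabs a * hnorm x.
Proof.
  unfold hnorm. rewrite hinner_scal_l, hinner_scal_r, <- Rmult_assoc.
  rewrite sqrt_mult_alt by apply Rle_0_sqr. rewrite <- (sqrt_Rsqr_abs a). reflexivity.
Qed.

Lemma hnorm_opp x : hnorm (hopp x) = hnorm x.
Proof. unfold hnorm. rewrite hinner_opp_l, hinner_opp_r, Ropp_involutive. reflexivity. Qed.

Lemma cauchy_schwarz x y : Rabs (hinner x y) <= hnorm x * hnorm y.
Proof.
  assert (Hsq : hinner x y * hinner x y <= hinner x x * hinner y y).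
  { destruct (Req_dec (hinner y y) 0) as [E|E].
    - rewrite (hinner_def H y E), (hinner_sym H x), !hinner_0l. lra.
    (* minimise the quadratic form t |-> <x - t y, x - t y> at t = <x,y>/<y,y> *)
    - pose proof (hinner_pos H y).
      set (t := hinner x y / hinner y y).
      assert (Q := hinner_pos H (hsub x (hscal t y))).
      rewrite hinner_sub_sub, !hinner_scal_r, hinner_scal_l in Q.
      assert (Et : t * hinner y y = hinner x y) by (unfold t; field; lra).
      nra. }
  rewrite <- (sqrt_Rsqr_abs (hinner x y)). unfold hnorm. rewrite <- sqrt_mult_alt by apply hinner_pos.
  apply sqrt_le_1_alt. exact Hsq.
Qed.

Lemma hinner_le x y : hinner x y <= hnorm x * hnorm y.
Proof. eapply Rle_trans; [apply Rle_abs | apply cauchy_schwarz]. Qed.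

Lemma hnorm_triangle x y : hnorm (hadd x y) <= hnorm x + hnorm y.
Proof.
  pose proof (hnorm_ge0 x). pose proof (hnorm_ge0 y).
  apply Rsqr_incr_0_var; [|pose proof (hnorm_ge0 (hadd x y)); lra].
  unfold Rsqr. rewrite hnorm_sqr, !hinner_add_l, !hinner_add_r, (hinner_sym H y x).
  pose proof (hinner_le x y). rewrite <- !hnorm_sqr. nra.
Qed.

Lemma hdist_sym x y : hnorm (hsub x y) = hnorm (hsub y x).
Proof. unfold hnorm. rewrite !hinner_sub_sub, (hinner_sym H y x). f_equal; ring. Qed.

Lemma hdist_triangle x y w : hnorm (hsub x w) <= hnorm (hsub x y) + hnorm (hsub y w).
Proof. rewrite (hsub_trans x y w). apply hnorm_triangle. Qed.

Lemma hdist_eq0 x y : hnorm (hsub x y) = 0 -> x = y.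
Proof. intro E. rewrite <- (hsub_addK x y), (hnorm_eq0 _ E). apply hadd_0l. Qed.

Lemma hdistrr x : hnorm (hsub x x) = 0.
Proof. rewrite hsubrr. apply hnorm_zero. Qed.

Lemma hnorm_le_dist x y : hnorm x <= hnorm (hsub x y) + hnorm y.
Proof. rewrite <- (hsub_addK x y) at 1. apply hnorm_triangle. Qed.

Lemma hdist_le x y : hnorm (hsub x y) <= hnorm x + hnorm y.
Proof. unfold hsub. rewrite <- (hnorm_opp y). apply hnorm_triangle. Qed.

Lemma hdist_rev_triangle x y w :
  Rabs (hnorm (hsub x w) - hnorm (hsub y w)) <= hnorm (hsub x y).
Proof.
  apply Rabs_le. pose proof (hdist_triangle x y w). pose proof (hdist_triangle y x w).
  rewrite (hdist_sym y x) in *. lra.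
Qed.

End HilbertAlgebra.

(** * A monotonicity criterion for continuous real functions *)

Definition cont_at (f : R -> R) (x : R) : Prop :=
  forall e, e > 0 -> exists d, d > 0 /\ forall y, Rabs (y - x) < d -> Rabs (f y - f x) < e.

Definition total_length (l : list (R * R)) : R :=
  fold_right (fun p acc => (snd p - fst p) + acc) 0 l.

Definition total_increment (f : R -> R) (l : list (R * R)) : R :=
  fold_right (fun p acc => (f (snd p) - f (fst p)) + acc) 0 l.

Definition cover_length (an bn : nat -> R) (F : list nat) : R :=
  fold_right (fun n acc => (bn n - an n) + acc) 0 F.

Definition record_point (f : R -> R) (a b y0 y1 x : R) : Prop :=
  a <= x <= b /\ (forall t, a <= t <= x -> f t <= f x) /\ y0 <= f x <= y1.

Lemma Rabs_le_inv x M : Rabs x <= M -> - M <= x <= M.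
Proof. intros Hx. pose proof (Rle_abs x). pose proof (Rle_abs (- x)). rewrite Rabs_Ropp in *. lra. Qed.

Lemma cont_at_continuity_pt f x : cont_at f x -> continuity_pt f x.
Proof.
  intros Hc eps Heps. destruct (Hc eps Heps) as [d [Hd Hf]].
  exists d. split; [lra|]. intros y [_ Hy]. apply Hf, Hy.
Qed.

Lemma intervals_in_le x b l : intervals_in x b l -> x <= b.
Proof.
  revert x. induction l as [|[p q] l IH]; simpl; [auto|].
  intros x [H1 [H2 H3]]. specialize (IH q H3). lra.
Qed.

Lemma intervals_in_widen x y b l : intervals_in x b l -> y <= x -> intervals_in y b l.
Proof. destruct l as [|[p q] l]; simpl; intuition lra. Qed.

Lemma cover_length_ge0 an bn F : (forall k, an k <= bn k) -> 0 <= cover_length an bn F.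
Proof. intros Hw; induction F as [|k F IH]; simpl; [lra|]. specialize (Hw k); lra. Qed.

Lemma cover_length_remove an bn F n : (forall k, an k <= bn k) -> In n F ->
  (bn n - an n) + cover_length an bn (remove Nat.eq_dec n F) <= cover_length an bn F.
Proof.
  intros Hw. assert (Hrm : forall G, cover_length an bn (remove Nat.eq_dec n G) <= cover_length an bn G).
  { induction G as [|k G IHG]; simpl; [lra|]. destruct (Nat.eq_dec n k); simpl; specialize (Hw k); lra. }
  induction F as [|k F IH]; simpl; [tauto|]. intros Hin.
  destruct (Nat.eq_dec n k) as [<-|Hnk]; simpl.
  - specialize (Hrm F). lra.
  - destruct Hin as [->|Hin]; [congruence|]. specialize (IH Hin). lra.
Qed.

Lemma cover_length_seq an bn M :
  cover_length an bn (seq 0 (S M)) = sum_f_R0 (fun k => bn k - an k) M.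
Proof.
  assert (Happ : forall F1 F2, cover_length an bn (F1 ++ F2) = cover_length an bn F1 + cover_length an bn F2).
  { induction F1; intros; simpl; [lra|]. rewrite IHF1; lra. }
  induction M; [simpl; lra|]. rewrite seq_S, Happ, IHM. simpl. lra.
Qed.

Section RecordPoints.
Variables (f : R -> R) (a b : R).
Hypothesis Hab : a <= b.
Hypothesis Hcont : forall t, a <= t <= b -> cont_at f t.

Lemma exists_sup_ab (P : R -> Prop) : P a -> (forall x, P x -> x <= b) ->
  exists s, a <= s <= b /\ (forall x, P x -> x <= s) /\
    forall rho, rho > 0 -> exists x, P x /\ s - rho < x.
Proof.
  intros Pa Pb. destruct (completeness P (ex_intro _ b Pb) (ex_intro _ a Pa)) as [s [Hub Hlub]].
  exists s. split; [split; [apply Hub, Pa | apply Hlub; exact Pb]|]. split; [exact Hub|].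
  intros rho Hr. apply NNPP. intro Hn. assert (s <= s - rho); [|lra].
  apply Hlub. intros x Px. apply Rnot_lt_le. intro Hlt. apply Hn. exists x; split; auto; lra.
Qed.

Lemma last_point_below m : f a <= m -> m < f b ->
  exists r, a <= r < b /\ f r = m /\ (forall t, a <= t <= r -> f t <= m) /\
    (forall x, x <= b -> (forall t, a <= t <= x -> f t <= m) -> x <= r).
Proof.
  intros Ha Hb.
  set (E := fun x => a <= x <= b /\ forall t, a <= t <= x -> f t <= m).
  assert (Ea : E a) by (split; [lra| intros t Ht; replace t with a by lra; auto]).
  destruct (exists_sup_ab E Ea (fun x Ex => proj2 (proj1 Ex))) as [r [[ar rb] [Hub Hnear]]].
  assert (Er : forall t, a <= t <= r -> f t <= m).
  { intros t Ht. apply Rnot_lt_le. intro Hgt.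
    destruct (Hcont t ltac:(lra) (f t - m)) as [d [Hd Hf]]; [lra|].
    destruct (Req_dec t r) as [->|Htr].
    - destruct (Req_dec r a) as [->|Hra]; [lra|].
      destruct (Hnear (Rmin d (r - a))) as [x [Ex Hxr]]; [apply Rmin_pos; lra|].
      pose proof (Rmin_l d (r - a)). pose proof (Rmin_r d (r - a)).
      assert (x <= r) by (apply Hub, Ex). destruct Ex as [_ Hx].
      specialize (Hf x ltac:(apply Rabs_def1; lra)). specialize (Hx x ltac:(lra)).
      apply Rabs_def2 in Hf. lra.
    - destruct (Hnear (r - t)) as [x [[_ Hx] Hxt]]; [lra|]. specialize (Hx t ltac:(lra)). lra. }
  assert (rlt : r < b) by (destruct (Req_dec r b) as [->|]; [specialize (Er b); lra| lra]).
  exists r. split; [lra|]. split; [|split; [exact Er|]].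
  - apply Rle_antisym; [apply Er; lra|]. apply Rnot_lt_le. intro Hlt.
    destruct (Hcont r ltac:(lra) (m - f r)) as [d [Hd Hf]]; [lra|].
    set (x := Rmin b (r + d / 2)).
    assert (r < x <= b) by (unfold x, Rmin; destruct Rle_dec; lra).
    assert (Ex : E x).
    { split; [lra|]. intros t Ht. destruct (Rle_dec t r); [apply Er; lra|].
      assert (Htr : Rabs (t - r) < d) by (apply Rabs_def1; unfold x, Rmin in *; destruct Rle_dec; lra).
      specialize (Hf t Htr). apply Rabs_def2 in Hf. lra. }
    specialize (Hub x Ex). lra.
  - intros x Hx Hx2. destruct (Rle_dec a x); [apply Hub; split; auto; lra | lra].
Qed.

Variables (y0 y1 : R) (an bn : nat -> R).
Hypothesis Hwell : forall n, an n <= bn n.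

(** Starting from a record point [p] and using intervals from [F] that cover all later record
    points, build disjoint intervals of total length at most that of [F] on which [f] rises by
    at least [y1 - f p]: climb to the maximum inside the current covering interval, then jump
    to the last point where [f] stays below that maximum, which is again a record point. *)
Lemma record_chain : y1 <= f b ->
  forall k F p, (length F < k)%nat -> record_point f a b y0 y1 p ->
  (forall t, record_point f a b y0 y1 t -> p <= t -> exists n, In n F /\ an n < t < bn n) ->
  exists l, intervals_in p b l /\ total_length l <= cover_length an bn F /\
    total_increment f l >= y1 - f p.
Proof.
  intros Hy1 k. induction k as [|k IH]; intros F p Hlen Kp Hcov; [lia|].
  destruct (Hcov p Kp (Rle_refl p)) as [n0 [Hin [Ha0 Hb0]]].
  destruct Kp as [[Hap Hpb] [Hmaxp [Hy0p Hy1p]]].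
  set (c := Rmin (bn n0) b).
  assert (pc : p <= c) by (unfold c, Rmin; destruct Rle_dec; lra).
  assert (cb : c <= b) by apply Rmin_r.
  destruct (continuity_ab_maj f p c pc) as [q [Hqmax Hq]].
  { intros t Ht; apply cont_at_continuity_pt, Hcont; lra. }
  assert (Hall : forall t, a <= t <= c -> f t <= f q).
  { intros t Ht. destruct (Rle_dec t p).
    - specialize (Hmaxp t ltac:(lra)). specialize (Hqmax p ltac:(lra)). lra.
    - apply Hqmax; lra. }
  assert (Wn := cover_length_remove an bn F n0 Hwell Hin).
  assert (Wr := cover_length_ge0 an bn (remove Nat.eq_dec n0 F) Hwell).
  assert (lenq : q - p <= bn n0 - an n0) by (assert (c <= bn n0) by apply Rmin_l; lra).
  destruct (Rle_dec y1 (f q)) as [Hge|Hlt].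
  { exists ((p, q) :: nil). simpl. split; [repeat split; lra|]. lra. }
  apply Rnot_le_lt in Hlt.
  destruct (last_point_below (f q) ltac:(apply Hall; lra) ltac:(lra))
    as [r [Hr [Hfr [Hbel Hmaxr]]]].
  assert (cr : c <= r) by (apply Hmaxr; auto).
  assert (Kr : record_point f a b y0 y1 r).
  { split; [lra|]. split; [intros t Ht; rewrite Hfr; apply Hbel; auto|].
    specialize (Hqmax p ltac:(lra)). lra. }
  assert (Hcov' : forall t, record_point f a b y0 y1 t -> r <= t ->
            exists n, In n (remove Nat.eq_dec n0 F) /\ an n < t < bn n).
  { intros t Kt Hrt. destruct (Hcov t Kt ltac:(lra)) as [n [Hn1 Hn2]]. exists n. split; auto.
    apply in_in_remove; auto. intros ->. unfold c, Rmin in cr; destruct Rle_dec; lra. }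
  assert (Hlen' : (length (remove Nat.eq_dec n0 F) < k)%nat)
    by (pose proof (remove_length_lt Nat.eq_dec F n0 Hin); lia).
  destruct (IH _ r Hlen' Kr Hcov') as [l [Hl1 [Hl2 Hl3]]].
  exists ((p, q) :: l). simpl. split; [repeat split; try lra; apply intervals_in_widen with r; [exact Hl1| lra]|].
  lra.
Qed.

Lemma not_record_point_open s : a <= s <= b -> ~ record_point f a b y0 y1 s ->
  exists rho, rho > 0 /\ forall t, Rabs (t - s) < rho -> ~ record_point f a b y0 y1 t.
Proof.
  intros Hs Hn. pose proof (Hcont s Hs) as Hc.
  destruct (classic (forall t, a <= t <= s -> f t <= f s)) as [Hall|Hex].
  - assert (Hout : f s < y0 \/ y1 < f s) by (destruct (Rlt_dec (f s) y0), (Rlt_dec y1 (f s));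
      auto; exfalso; apply Hn; repeat split; auto; lra).
    destruct (Hc (Rmax (y0 - f s) (f s - y1))) as [d [Hd Hf]].
    { destruct Hout; [eapply Rlt_le_trans, Rmax_l| eapply Rlt_le_trans, Rmax_r]; lra. }
    exists d; split; auto. intros t Ht [_ [_ Kt]]. specialize (Hf t Ht). apply Rabs_def2 in Hf.
    unfold Rmax in Hf; destruct Rle_dec; lra.
  - apply not_all_ex_not in Hex. destruct Hex as [t0 Ht0].
    apply imply_to_and in Ht0. destruct Ht0 as [Ht0 Hgt]. apply Rnot_le_lt in Hgt.
    assert (t0 < s) by (destruct (Req_dec t0 s) as [->|]; lra).
    destruct (Hc (f t0 - f s)) as [d [Hd Hf]]; [lra|].
    exists (Rmin d (s - t0)). split; [apply Rmin_pos; lra|].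
    intros t Ht [_ [Kt _]]. pose proof (Rmin_l d (s - t0)). pose proof (Rmin_r d (s - t0)).
    specialize (Hf t ltac:(lra)). apply Rabs_def2 in Hf. apply Rabs_def2 in Ht.
    specialize (Kt t0 ltac:(lra)). lra.
Qed.

(** The record points form a compact set, so a countable open cover has a finite subcover. *)
Lemma record_points_finite_subcover :
  (forall x, record_point f a b y0 y1 x -> exists n, an n < x < bn n) ->
  exists M, forall t, record_point f a b y0 y1 t -> exists n, (n <= M)%nat /\ an n < t < bn n.
Proof.
  intros Hcov.
  set (E := fun x => a <= x <= b /\ exists M, forall t, record_point f a b y0 y1 t -> t <= x ->
                       exists n, (n <= M)%nat /\ an n < t < bn n).
  assert (Ea : E a).
  { split; [lra|]. destruct (classic (record_point f a b y0 y1 a)) as [Ka|Ka].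
    - destruct (Hcov a Ka) as [n Hn]. exists n. intros t Kt Hta.
      replace t with a by (destruct Kt as [[? ?] _]; lra). exists n; split; auto.
    - exists 0%nat. intros t Kt Hta. replace t with a in Kt by (destruct Kt as [[? ?] _]; lra). tauto. }
  destruct (exists_sup_ab E Ea (fun x Ex => proj2 (proj1 Ex))) as [s [[Has sb] [Hub Hnear]]].
  assert (ext : exists x', E x' /\ (s < x' \/ x' = b)).
  { destruct (classic (record_point f a b y0 y1 s)) as [Ks|Ks].
    - destruct (Hcov s Ks) as [n0 Hn0].
      destruct (Hnear (s - an n0)) as [x [Ex Hx2]]; [lra|].
      assert (xs : x <= s) by (apply Hub, Ex). destruct Ex as [Hx1 [M HM]].
      set (x' := Rmin b ((s + bn n0) / 2)).
      exists x'. split; [split; [unfold x', Rmin; destruct Rle_dec; lra|]|].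
      + exists (Nat.max M n0). intros t Kt Ht.
        destruct (Rle_dec t x) as [Htx|Htx].
        * destruct (HM t Kt Htx) as [n [Hn Hn']]. exists n; split; auto; lia.
        * exists n0. split; [lia|]. unfold x', Rmin in Ht; destruct Rle_dec; lra.
      + unfold x', Rmin; destruct Rle_dec; [right; auto|left; lra].
    - destruct (not_record_point_open s ltac:(lra) Ks) as [rho [Hr Hrho]].
      destruct (Hnear rho Hr) as [x [Ex Hx2]].
      assert (xs : x <= s) by (apply Hub, Ex). destruct Ex as [Hx1 [M HM]].
      set (x' := Rmin b (s + rho / 2)).
      exists x'. split; [split; [unfold x', Rmin; destruct Rle_dec; lra|]|].
      + exists M. intros t Kt Ht.
        destruct (Rle_dec t x) as [Htx|Htx]; [apply HM; auto|].
        exfalso. apply (Hrho t); auto. apply Rabs_def1; unfold x', Rmin in Ht; destruct Rle_dec; lra.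
      + unfold x', Rmin; destruct Rle_dec; [right; auto|left; lra]. }
  destruct ext as [x' [Ex' [Hlt | ->]]]; [specialize (Hub x' Ex'); lra|].
  destruct Ex' as [_ [M HM]]. exists M. intros t Kt. apply HM; auto. destruct Kt as [[? ?] _]; auto.
Qed.

End RecordPoints.

(** A continuous function that decreases strictly to the left of every point outside a null
    set, and whose increments over short interval systems are small, is nonincreasing:
    otherwise its record points in a rising band lie in the null set, and covering them by
    short intervals yields a short interval system with a large increment. *)
Lemma nonincreasing_of_left_decrease (f : R -> R) (N : R -> Prop) a b : a < b ->
  (forall t, a <= t <= b -> cont_at f t) -> null_set N ->
  (forall t, a < t <= b -> ~ N t -> exists d, d > 0 /\ forall h, 0 < h < d -> f t < f (t - h)) ->
  (forall e, e > 0 -> exists d, d > 0 /\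
     forall l, intervals_in a b l -> total_length l < d -> total_increment f l < e) ->
  f b <= f a.
Proof.
  intros Hab Hc Hnull Hgood Hac.
  apply Rnot_lt_le. intro Hgt. set (D := f b - f a).
  set (y0 := f a + D / 3). set (y1 := f b).
  destruct (Hac (D / 3)) as [del [Hdel Hacd]]; [unfold D; lra|].
  destruct (Hnull (del / 2)) as [an [bn [Hw [Hsum HcovN]]]]; [lra|].
  assert (KN : forall x, record_point f a b y0 y1 x -> N x).
  { intros x [[Hax Hxb] [Hmx [Hy0 Hy1]]]. apply NNPP. intro Hn.
    assert (a < x) by (destruct (Req_dec a x) as [<-|]; [unfold y0, D in Hy0; lra|lra]).
    destruct (Hgood x ltac:(lra) Hn) as [d [Hd Hl]].
    set (h := Rmin d (x - a) / 2).
    assert (0 < h < d) by (unfold h, Rmin; destruct Rle_dec; lra).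
    assert (a <= x - h <= x) by (unfold h, Rmin; destruct Rle_dec; lra).
    specialize (Hl h ltac:(lra)). specialize (Hmx (x - h) ltac:(lra)). lra. }
  destruct (record_points_finite_subcover f a b ltac:(lra) Hc y0 y1 an bn
              (fun x Kx => HcovN x (KN x Kx))) as [M HM].
  destruct (last_point_below f a b ltac:(lra) Hc y0 ltac:(unfold y0, D; lra) ltac:(unfold y0, D; lra))
    as [p0 [Hp0 [Hfp0 [Hbel _]]]].
  assert (Kp0 : record_point f a b y0 y1 p0).
  { split; [lra|]. split; [intros; rewrite Hfp0; auto| unfold y1, y0, D in *; lra]. }
  destruct (record_chain f a b ltac:(lra) Hc y0 y1 an bn Hw (Rle_refl _)
     (S (length (seq 0 (S M)))) (seq 0 (S M)) p0 ltac:(lia) Kp0) as [l [Hl1 [Hl2 Hl3]]].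
  { intros t Kt _. destruct (HM t Kt) as [n [Hn1 Hn2]]. exists n. split; auto.
    apply in_seq. lia. }
  rewrite cover_length_seq in Hl2. specialize (Hsum M).
  assert (Hi := Hacd l (intervals_in_widen p0 a b l Hl1 ltac:(lra)) ltac:(lra)).
  unfold y1, y0, D in *. lra.
Qed.

(** * The energy is Lipschitz on [C] *)

Section EnergyLipschitz.
Variables (H : HilbertSpace) (C U : H -> Prop) (j : H -> R) (gj : H -> H) (eta Leta : H -> R).
Hypothesis hCU : forall x, C x -> U x.
Hypothesis hCc : hconvex H C.

Definition segment (u w : H) (s : R) : H := hadd (hscal s u) (hscal (1 - s) w).

Lemma hinner_segment_segment u w s1 s2 :
  hinner (segment u w s1) (segment u w s2) =
  s1 * s2 * hinner u u + (s1 * (1 - s2) + (1 - s1) * s2) * hinner u w + (1 - s1) * (1 - s2) * hinner w w.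
Proof.
  unfold segment. rewrite !hinner_add_l, !hinner_add_r, !hinner_scal_l, !hinner_scal_r.
  rewrite (hinner_sym H w u). ring.
Qed.

Lemma hinner_segment g u w s :
  hinner g (segment u w s) = s * hinner g u + (1 - s) * hinner g w.
Proof. unfold segment. rewrite hinner_add_r, !hinner_scal_r. ring. Qed.

Lemma hdist_segment u w s h :
  hnorm (hsub (segment u w (s + h)) (segment u w s)) = Rabs h * hnorm (hsub u w).
Proof.
  unfold hnorm. rewrite !hinner_sub_sub, !hinner_segment_segment.
  rewrite <- (sqrt_Rsqr_abs h), <- sqrt_mult_alt by apply Rle_0_sqr.
  f_equal. unfold Rsqr. ring.
Qed.

Lemma segment_derivative u w s : is_gradient_on H U j gj -> C u -> C w -> 0 <= s <= 1 ->
  derivable_pt_lim (fun s => j (segment u w s)) s (hinner (gj (segment u w s)) (hsub u w)).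
Proof.
  intros hgrad Cu Cw Hs eps Heps.
  set (x := segment u w). set (nd := hnorm (hsub u w)). assert (Hnd : 0 <= nd) by apply hnorm_ge0.
  set (e1 := eps / (2 * (nd + 1))).
  destruct (hgrad (x s) (hCU _ (hCc u w s Cu Cw Hs)) e1) as [dG [HdG Hg]];
    [unfold e1; apply Rdiv_lt_0_compat; lra|].
  assert (Hdp : 0 < dG / (nd + 1)) by (apply Rdiv_lt_0_compat; lra).
  exists (mkposreal _ Hdp). simpl. intros h Hh0 Hh.
  set (k := hsub (x (s + h)) (x s)).
  assert (Nk : hnorm k = Rabs h * nd) by apply hdist_segment.
  assert (Ik : hinner (gj (x s)) k = h * hinner (gj (x s)) (hsub u w)).
  { unfold k, x. rewrite !hinner_sub_r, !hinner_segment. ring. }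
  assert (Hkd : hnorm k < dG).
  { rewrite Nk. apply Rle_lt_trans with (Rabs h * (nd + 1)); [pose proof (Rabs_pos h); nra|].
    apply Rmult_lt_reg_r with (/ (nd + 1)); [apply Rinv_0_lt_compat; lra|].
    rewrite Rmult_assoc, Rinv_r by lra. lra. }
  specialize (Hg k Hkd). unfold k in Hg at 1. rewrite hadd_subK, Ik, Nk in Hg.
  assert (Hah : 0 < Rabs h) by (apply Rabs_pos_lt; auto).
  replace ((j (x (s + h)) - j (x s)) / h - hinner (gj (x s)) (hsub u w))
    with ((j (x (s + h)) - j (x s) - h * hinner (gj (x s)) (hsub u w)) / h) by (field; auto).
  unfold Rdiv. rewrite Rabs_mult, Rabs_inv.
  apply Rle_lt_trans with (e1 * nd).
  - apply Rmult_le_reg_r with (Rabs h); [lra|]. rewrite Rmult_assoc, Rinv_l by lra. nra.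
  - unfold e1. apply Rmult_lt_reg_r with (2 * (nd + 1)); [lra|].
    replace (eps / (2 * (nd + 1)) * nd * (2 * (nd + 1))) with (eps * nd) by (field; lra). nra.
Qed.

Lemma gradient_bound_lipschitz_on G : is_gradient_on H U j gj ->
  (forall x, C x -> hnorm (gj x) <= G) ->
  forall u w, C u -> C w -> Rabs (j u - j w) <= G * hnorm (hsub u w).
Proof.
  intros hgrad hG u w Cu Cw.
  destruct (MVT_cor2 _ _ 0 1 ltac:(lra) (fun s Hs => segment_derivative u w s hgrad Cu Cw Hs))
    as [c [Hc1 Hc2]].
  assert (X1 : segment u w 1 = u)
    by (unfold segment; rewrite Rminus_diag, hscal0, hscal_one, hadd_zero; auto).
  assert (X0 : segment u w 0 = w)
    by (unfold segment; rewrite Rminus_0_r, hscal0, hscal_one, hadd_0l; auto).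
  rewrite X1, X0, Rminus_0_r, Rmult_1_r in Hc1. rewrite Hc1.
  eapply Rle_trans; [apply cauchy_schwarz|].
  apply Rmult_le_compat_r; [apply hnorm_ge0|]. apply hG, hCc; auto; lra.
Qed.

Lemma slope_bound_lipschitz_on Me : slope_bound H eta Leta ->
  (forall x, C x -> Rabs (Leta x) <= Me) ->
  forall u w, C u -> C w -> Rabs (eta u - eta w) <= Me * hnorm (hsub u w).
Proof.
  intros hL hMe.
  assert (one : forall u w, C u -> C w -> eta u - eta w <= Me * hnorm (hsub u w)).
  { intros u w Cu Cw. pose proof (hnorm_ge0 H (hsub u w)).
    pose proof (Rle_abs (Leta u)). pose proof (Rabs_pos (Leta u)). specialize (hMe u Cu).
    destruct (Rle_dec (eta w) (eta u)) as [Hle|Hlt]; [|nra].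
    destruct (classic (w = u)) as [->|Hne]; [rewrite hdistrr; lra|].
    assert (Np : 0 < hnorm (hsub u w)).
    { destruct (Req_dec (hnorm (hsub u w)) 0) as [E|E]; [|lra].
      exfalso. apply Hne. symmetry. apply hdist_eq0, E. }
    specialize (hL u w Hle Hne).
    apply Rmult_le_reg_r with (/ hnorm (hsub u w)); [apply Rinv_0_lt_compat; auto|].
    rewrite Rmult_assoc, Rinv_r by lra. unfold Rdiv in hL. lra. }
  intros u w Cu Cw. apply Rabs_le. split.
  - specialize (one w u Cw Cu). rewrite hdist_sym in one. lra.
  - apply one; auto.
Qed.

Lemma lipschitz_bounded_on L Mc c0 : lipschitz_on H U L gj -> C c0 ->
  (forall x, C x -> hnorm x <= Mc) ->
  forall x, C x -> hnorm (gj x) <= hnorm (gj c0) + Rabs L * (Mc + Mc).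
Proof.
  intros hlip Cc0 HMc x Cx.
  pose proof (hnorm_le_dist H (gj x) (gj c0)). pose proof (hlip x c0 (hCU x Cx) (hCU c0 Cc0)).
  pose proof (hdist_le H x c0). pose proof (HMc x Cx). pose proof (HMc c0 Cc0).
  pose proof (hnorm_ge0 H (hsub x c0)). pose proof (Rle_abs L). pose proof (Rabs_pos L).
  nra.
Qed.

Definition energy (u : H) : R := j u + eta u.

Lemma energy_lipschitz_on L : nonempty H C -> hbounded H C -> C11 H U L j gj ->
  bounded_on_bounded H Leta -> slope_bound H eta Leta ->
  exists K, 0 <= K /\
    forall u w, C u -> C w -> Rabs (energy u - energy w) <= K * hnorm (hsub u w).
Proof.
  intros [c0 Cc0] [Mc HMc] [hgrad hlip] hLb hL.
  destruct (hLb C (ex_intro _ Mc HMc)) as [Me HMe].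
  assert (Hj := gradient_bound_lipschitz_on _ hgrad (lipschitz_bounded_on L Mc c0 hlip Cc0 HMc)).
  assert (He := slope_bound_lipschitz_on Me hL HMe).
  set (G := hnorm (gj c0) + Rabs L * (Mc + Mc)) in Hj.
  exists (Rabs G + Rabs Me). split; [pose proof (Rabs_pos G); pose proof (Rabs_pos Me); lra|].
  intros u w Cu Cw. specialize (Hj u w Cu Cw). specialize (He u w Cu Cw).
  pose proof (hnorm_ge0 H (hsub u w)). pose proof (Rle_abs G). pose proof (Rle_abs Me).
  unfold energy. replace (j u + eta u - (j w + eta w)) with ((j u - j w) + (eta u - eta w)) by ring.
  eapply Rle_trans; [apply Rabs_triang|]. nra.
Qed.

End EnergyLipschitz.

(** * The energy along a strong solution *)

Lemma S_set_descent (H : HilbertSpace) (C : H -> Prop) (gj : H -> H) (eta : H -> R) u v X :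
  S_set H C gj eta u v -> C X ->
  eta u - eta X <= - hinner v (hsub u X) - hinner (gj u) (hsub u X).
Proof.
  intros [g [n [Hg [Hn ->]]]] CX. specialize (Hg X). specialize (Hn X CX).
  rewrite !hinner_sub_l, !hinner_sub_r, !hinner_opp_l in *. lra.
Qed.

Lemma left_increment_estimates (H : HilbertSpace) (z : R -> H) t v e :
  has_derivative_at H z t v -> e > 0 -> exists d, d > 0 /\ forall h, 0 < h < d ->
    h * (hnorm v * hnorm v - hnorm v * e) <= hinner v (hsub (z t) (z (t - h))) /\
    hnorm (hsub (z t) (z (t - h))) <= h * (hnorm v + e).
Proof.
  intros Hder He. destruct (Hder e He) as [d [Hd HD]]. exists d. split; [exact Hd|]. intros h Hh.
  specialize (HD (- h) ltac:(lra) ltac:(rewrite Rabs_Ropp, Rabs_right; lra)).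
  replace (t + - h) with (t - h) in HD by ring.
  set (w := hscal (/ - h) (hsub (z (t - h)) (z t))) in HD.
  assert (Iw : hinner v (hsub (z t) (z (t - h))) = h * hinner v w).
  { unfold w. rewrite hinner_scal_r, !hinner_sub_r. field. lra. }
  assert (Nw : hnorm (hsub (z t) (z (t - h))) = h * hnorm w).
  { unfold w. rewrite hnorm_scal, Rabs_inv, Rabs_Ropp, Rabs_right, hdist_sym by lra. field. lra. }
  assert (Ivw : hinner v w = hinner v (hsub w v) + hnorm v * hnorm v)
    by (rewrite hinner_sub_r, hnorm_sqr; ring).
  pose proof (cauchy_schwarz H v (hsub w v)) as CS. apply Rabs_le_inv in CS.
  pose proof (hnorm_le_dist H w v). pose proof (hnorm_ge0 H v). pose proof (hnorm_ge0 H (hsub w v)).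
  rewrite Iw, Nw. split; apply Rmult_le_compat_l; nra.
Qed.

Definition variation_sum (H : HilbertSpace) (z : R -> H) (l : list (R * R)) : R :=
  fold_right (fun p acc => hnorm (hsub (z (snd p)) (z (fst p))) + acc) 0 l.

Lemma variation_sum_ge0 (H : HilbertSpace) z l : 0 <= variation_sum H z l.
Proof.
  induction l as [|p l IH]; simpl; [lra|].
  pose proof (hnorm_ge0 H (hsub (z (snd p)) (z (fst p)))). lra.
Qed.

Lemma total_increment_le_variation (H : HilbertSpace) (F : R -> R) (z : R -> H) K a b :
  (forall p q, a <= p -> p <= q -> q <= b -> F q - F p <= K * hnorm (hsub (z q) (z p))) ->
  forall l a', a <= a' -> intervals_in a' b l -> total_increment F l <= K * variation_sum H z l.
Proof.
  intros Hlip l. induction l as [|[p q] l IH]; intros a' Ha' Hl; simpl; [lra|].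
  destruct Hl as [H1 [H2 H3]]. pose proof (intervals_in_le q b l H3).
  specialize (IH q ltac:(lra) H3). specialize (Hlip p q ltac:(lra) H2 ltac:(lra)).
  unfold total_increment, variation_sum in *. simpl. lra.
Qed.

Lemma abs_continuous_increment_small (H : HilbertSpace) (F : R -> R) (z : R -> H) K a b :
  0 <= K -> abs_continuous_on H z a b ->
  (forall p q, a <= p -> p <= q -> q <= b -> F q - F p <= K * hnorm (hsub (z q) (z p))) ->
  forall e, e > 0 -> exists d, d > 0 /\
    forall l, intervals_in a b l -> total_length l < d -> total_increment F l < e.
Proof.
  intros HK Hac Hlip e He.
  destruct (Hac (e / (K + 1))) as [d [Hd Hd2]]; [apply Rdiv_lt_0_compat; lra|].
  exists d. split; [exact Hd|]. intros l Hl Hlen.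
  specialize (Hd2 l Hl Hlen). fold (variation_sum H z l) in Hd2.
  pose proof (total_increment_le_variation H F z K a b Hlip l a (Rle_refl a) Hl).
  pose proof (variation_sum_ge0 H z l).
  apply Rmult_lt_compat_r with (r := K + 1) in Hd2; [|lra].
  replace (e / (K + 1) * (K + 1)) with e in Hd2 by (field; lra). nra.
Qed.

(** The identity is not nonincreasing, so a null set cannot contain a whole interval. *)
Lemma null_set_misses_interval (N : R -> Prop) a b : a < b -> null_set N ->
  exists t, a < t <= b /\ ~ N t.
Proof.
  intros Hab HN. apply NNPP. intro Hall.
  assert (b <= a); [|lra].
  apply (nonincreasing_of_left_decrease (fun x => x) N a b Hab); [| exact HN | |].
  - intros t _ e He. exists e. split; [exact He|]. intros y Hy. exact Hy.
  - intros t Ht Hn. exfalso. apply Hall. exists t. split; [exact Ht| exact Hn].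
  - intros e He. exists e. split; [exact He|]. intros l _ Hl. exact Hl.
Qed.

Lemma derivative_of_stationary (H : HilbertSpace) (z : R -> H) t v : 0 < t ->
  (forall s, 0 < s -> z s = z t) -> has_derivative_at H z t v -> v = hzero.
Proof.
  intros Ht Hst Hder. apply hnorm_eq0. apply Rle_antisym; [|apply hnorm_ge0].
  apply Rnot_lt_le. intro Hv. destruct (Hder _ Hv) as [d [Hd HD]].
  set (h := Rmin d t / 2).
  assert (0 < h < d /\ h < t) by (unfold h, Rmin; destruct Rle_dec; lra).
  specialize (HD h ltac:(lra) ltac:(rewrite Rabs_right; lra)).
  rewrite (Hst (t + h)), hsubrr, hscal_zero in HD by lra.
  unfold hsub in HD. rewrite hadd_0l, hnorm_opp in HD. lra.
Qed.

Section Trajectory.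
Variables (H : HilbertSpace) (C U : H -> Prop) (j : H -> R) (gj : H -> H) (eta : H -> R).
Variables (z : R -> H) (K : R).
Hypothesis hgrad : is_gradient_on H U j gj.
Hypothesis hCU : forall x, C x -> U x.
Hypothesis hz : strong_solution H C gj eta z.
Hypothesis hK : 0 <= K.
Hypothesis hlip : forall u w, C u -> C w ->
  Rabs (energy H j eta u - energy H j eta w) <= K * hnorm (hsub u w).

Local Notation E := (energy H j eta).

Let hcont : continuous_on_Rplus H z := proj1 hz.
Let hzC : forall t, 0 <= t -> C (z t) := proj1 (proj2 hz).

Definition good_time (t : R) : Prop :=
  exists v, has_derivative_at H z t v /\ S_set H C gj eta (z t) v.

Lemma energy_left_descent t v : 0 < t -> has_derivative_at H z t v -> S_set H C gj eta (z t) v ->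
  forall e, e > 0 -> exists d, d > 0 /\ forall h, 0 < h < d ->
    E (z t) - E (z (t - h)) <= - (h * (hnorm v * hnorm v - hnorm v * e))
                               + e * hnorm (hsub (z t) (z (t - h))) /\
    hnorm (hsub (z t) (z (t - h))) <= h * (hnorm v + e).
Proof.
  intros Ht Hder HS e He.
  destruct (left_increment_estimates H z t v e Hder He) as [dD [HdD HD]].
  destruct (hgrad (z t) (hCU _ (hzC t ltac:(lra))) e He) as [dG [HdG HG]].
  destruct (hcont t ltac:(lra) dG HdG) as [dC [HdC HC]].
  exists (Rmin dD (Rmin dC t)). split; [repeat apply Rmin_pos; lra|]. intros h Hh.
  pose proof (Rmin_l dD (Rmin dC t)). pose proof (Rmin_r dD (Rmin dC t)).
  pose proof (Rmin_l dC t). pose proof (Rmin_r dC t).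
  destruct (HD h ltac:(lra)) as [HD1 HD2]. split; [|exact HD2].
  set (u := z t) in *. set (X := z (t - h)) in *.
  assert (Hk : hnorm (hsub X u) < dG) by (apply HC; [lra| rewrite Rabs_left; lra]).
  specialize (HG _ Hk). rewrite hadd_subK in HG. apply Rabs_le_inv in HG.
  pose proof (S_set_descent H C gj eta u v X HS (hzC (t - h) ltac:(lra))).
  rewrite (hdist_sym H X u) in HG. rewrite !hinner_sub_r in *. unfold E, energy. lra.
Qed.

Definition penalized_energy (lam a s : R) : R := E (z s) + 2 * lam * hnorm (hsub (z s) (z a)).

Lemma penalized_energy_increment lam a p q : 0 <= lam -> 0 <= p -> 0 <= q ->
  Rabs (penalized_energy lam a q - penalized_energy lam a p) <= (K + 2 * lam) * hnorm (hsub (z q) (z p)).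
Proof.
  intros Hlam Hp Hq. unfold penalized_energy.
  pose proof (hlip _ _ (hzC q Hq) (hzC p Hp)) as L1.
  pose proof (hdist_rev_triangle H (z q) (z p) (z a)) as L2.
  apply Rabs_le_inv in L1. apply Rabs_le_inv in L2. apply Rabs_le. nra.
Qed.

Lemma penalized_energy_cont_at lam a c t : 0 <= lam -> 0 < t ->
  cont_at (fun s => penalized_energy lam a s - c * s) t.
Proof.
  intros Hlam Ht e He.
  set (A := K + 2 * lam + 1). set (B := Rabs c + 1).
  assert (HA : 0 < A) by (unfold A; lra).
  assert (HB : Rabs c < B) by (unfold B; lra). pose proof (Rabs_pos c).
  destruct (hcont t ltac:(lra) (e / (2 * A))) as [dz [Hdz Hz]]; [apply Rdiv_lt_0_compat; lra|].
  exists (Rmin dz (Rmin t (e / (2 * B)))).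
  split; [repeat apply Rmin_pos; try apply Rdiv_lt_0_compat; lra|]. intros y Hy.
  pose proof (Rmin_l dz (Rmin t (e / (2 * B)))). pose proof (Rmin_r dz (Rmin t (e / (2 * B)))).
  pose proof (Rmin_l t (e / (2 * B))). pose proof (Rmin_r t (e / (2 * B))).
  assert (Hy0 : 0 <= y) by (apply Rabs_def2 in Hy; lra).
  specialize (Hz y Hy0 ltac:(lra)).
  pose proof (penalized_energy_increment lam a t y Hlam ltac:(lra) Hy0) as Hinc.
  pose proof (hnorm_ge0 H (hsub (z y) (z t))). pose proof (Rabs_pos (y - t)).
  assert (HzA : A * hnorm (hsub (z y) (z t)) < e / 2).
  { apply Rmult_lt_compat_l with (r := A) in Hz; [|lra].
    replace (A * (e / (2 * A))) with (e / 2) in Hz by (field; lra). exact Hz. }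
  assert (HyB : B * Rabs (y - t) < e / 2).
  { replace (e / 2) with (B * (e / (2 * B))) by (field; lra).
    apply Rmult_lt_compat_l; lra. }
  replace (penalized_energy lam a y - c * y - (penalized_energy lam a t - c * t))
    with ((penalized_energy lam a y - penalized_energy lam a t) - c * (y - t)) by ring.
  eapply Rle_lt_trans; [apply Rabs_triang|]. rewrite Rabs_Ropp, Rabs_mult.
  assert ((K + 2 * lam) * hnorm (hsub (z y) (z t)) <= A * hnorm (hsub (z y) (z t))) by (unfold A; nra).
  assert (Rabs c * Rabs (y - t) <= B * Rabs (y - t)) by nra.
  lra.
Qed.

Lemma penalized_left_decrease lam a eps t : 0 <= lam -> eps > 0 -> 0 < t -> good_time t ->
  exists d, d > 0 /\ forall h, 0 < h < d ->
    penalized_energy lam a t - (lam * lam + eps) * t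
      < penalized_energy lam a (t - h) - (lam * lam + eps) * (t - h).
Proof.
  intros Hlam Heps Ht [v [Hder HS]].
  pose proof (hnorm_ge0 H v). set (nv := hnorm v) in *.
  set (c := 2 * nv + 1 + 2 * lam).
  set (e := Rmin 1 (eps / (2 * c))).
  assert (He : 0 < e) by (unfold e; apply Rmin_pos; [lra| apply Rdiv_lt_0_compat; unfold c; lra]).
  assert (He1 : e <= 1) by apply Rmin_l.
  assert (Hec : e * c <= eps / 2).
  { assert (e <= eps / (2 * c)) by apply Rmin_r.
    replace (eps / 2) with (eps / (2 * c) * c) by (unfold c; field; lra).
    apply Rmult_le_compat_r; [unfold c|]; lra. }
  destruct (energy_left_descent t v Ht Hder HS e He) as [d [Hd HD]].
  exists d. split; [exact Hd|]. intros h Hh. destruct (HD h Hh) as [D1 D2].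
  fold nv in D1, D2. set (n := hnorm (hsub (z t) (z (t - h)))) in *.
  pose proof (hdist_triangle H (z t) (z (t - h)) (z a)) as Tr. fold n in Tr.
  assert (Hn : (e + 2 * lam) * n <= (e + 2 * lam) * (h * (nv + e))) by (apply Rmult_le_compat_l; lra).
  (* the bracket is [-(nv - lam)^2 + e (2 nv + e + 2 lam)], at most [lam^2 + eps / 2] *)
  assert (Q : - (nv * nv) + nv * e + (e + 2 * lam) * (nv + e) <= lam * lam + eps / 2).
  { assert (e * c = 2 * nv * e + e + 2 * lam * e) by (unfold c; ring).
    assert (e * e <= e) by nra. pose proof (Rle_0_sqr (nv - lam)). unfold Rsqr in *. nra. }
  unfold penalized_energy. nra.
Qed.

Lemma penalized_energy_nonincreasing lam a b : 0 < a < b -> 0 <= lam ->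
  penalized_energy lam a b - lam * lam * b <= penalized_energy lam a a - lam * lam * a.
Proof.
  intros Hab Hlam. pose proof hz as [_ [_ [hAC hnull]]].
  assert (key : forall eps, eps > 0 -> penalized_energy lam a b - (lam * lam + eps) * b
                                      <= penalized_energy lam a a - (lam * lam + eps) * a).
  { intros eps Heps.
    apply (nonincreasing_of_left_decrease (fun s => penalized_energy lam a s - (lam * lam + eps) * s)
             (fun t => 0 <= t /\ ~ good_time t) a b); [lra| | exact hnull | |].
    - intros t Ht. apply penalized_energy_cont_at; lra.
    - intros t Ht Hn. apply penalized_left_decrease; [lra| lra| lra|].
      apply NNPP. intro Hng. apply Hn. split; [lra| exact Hng].
    - apply (abs_continuous_increment_small H _ z (K + 2 * lam) a b); [lra| apply hAC; lra|].
      intros p q Hp Hpq Hq.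
      pose proof (penalized_energy_increment lam a p q Hlam ltac:(lra) ltac:(lra)) as Hinc.
      apply Rabs_le_inv in Hinc. nra. }
  apply Rnot_lt_le. intro Hlt.
  set (gap := penalized_energy lam a b - lam * lam * b - (penalized_energy lam a a - lam * lam * a)).
  specialize (key (gap / (2 * (b - a))) ltac:(apply Rdiv_lt_0_compat; unfold gap; lra)).
  assert (gap / (2 * (b - a)) * (b - a) = gap / 2) by (field; lra).
  unfold gap in *. nra.
Qed.

Lemma energy_nonincreasing a b : 0 < a < b -> E (z b) <= E (z a).
Proof.
  intros Hab. pose proof (penalized_energy_nonincreasing 0 a b Hab (Rle_refl 0)).
  unfold penalized_energy in *. lra.
Qed.

(** With [lam = |z b - z a| / (b - a)] the penalty [2 lam |z b - z a| - lam^2 (b - a)] is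
    [|z b - z a|^2 / (b - a)], so equal energies force equal states. *)
Lemma trajectory_eq_of_energy_eq a b : 0 < a < b -> E (z b) = E (z a) -> z b = z a.
Proof.
  intros Hab Heq. apply hdist_eq0.
  pose proof (hnorm_ge0 H (hsub (z b) (z a))). set (n := hnorm (hsub (z b) (z a))) in *.
  set (lam := n / (b - a)).
  assert (Hl : 0 <= lam) by (unfold lam; apply Rmult_le_pos; [lra| apply Rlt_le, Rinv_0_lt_compat; lra]).
  pose proof (penalized_energy_nonincreasing lam a b Hab Hl) as G.
  unfold penalized_energy in G. rewrite hdistrr in G. fold n in G.
  assert (lam * (b - a) = n) by (unfold lam; field; lra).
  nra.
Qed.

Lemma energy_le_initial t : 0 <= t -> E (z t) <= E (z 0).
Proof.
  intros Ht. apply Rnot_lt_le. intro Hgt.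
  assert (Htp : 0 < t) by (destruct (Req_dec t 0) as [->|]; lra).
  destruct (hcont 0 (Rle_refl 0) ((E (z t) - E (z 0)) / (K + 1))) as [d [Hd Hdd]].
  { apply Rdiv_lt_0_compat; lra. }
  set (s := Rmin d t / 2).
  assert (0 < s < d /\ s < t) by (unfold s, Rmin; destruct Rle_dec; lra).
  specialize (Hdd s ltac:(lra) ltac:(rewrite Rminus_0_r, Rabs_right; lra)).
  pose proof (hlip _ _ (hzC s ltac:(lra)) (hzC 0 (Rle_refl 0))) as L. apply Rabs_le_inv in L.
  pose proof (energy_nonincreasing s t ltac:(lra)).
  pose proof (hnorm_ge0 H (hsub (z s) (z 0))).
  apply Rmult_lt_compat_l with (r := K + 1) in Hdd; [|lra].
  replace ((K + 1) * ((E (z t) - E (z 0)) / (K + 1))) with (E (z t) - E (z 0)) in Hdd by (field; lra).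
  nra.
Qed.

Lemma trajectory_stationary : (forall t, 0 < t -> E (z t) = E (z 0)) ->
  forall t, 0 < t -> z t = z 0.
Proof.
  intros Hc t Ht. apply hdist_eq0. apply Rle_antisym; [|apply hnorm_ge0].
  apply Rnot_lt_le. intro Hn. destruct (hcont 0 (Rle_refl 0) _ Hn) as [d [Hd Hdd]].
  set (s := Rmin d t / 2).
  assert (0 < s < d /\ s < t) by (unfold s, Rmin; destruct Rle_dec; lra).
  specialize (Hdd s ltac:(lra) ltac:(rewrite Rminus_0_r, Rabs_right; lra)).
  rewrite (trajectory_eq_of_energy_eq s t ltac:(lra) ltac:(rewrite (Hc t), (Hc s) by lra; reflexivity)) in Hdd.
  lra.
Qed.

Lemma energy_drops : ~ S_set H C gj eta (z 0) hzero -> exists T, T > 0 /\ E (z T) < E (z 0).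
Proof.
  intros Hz0. apply NNPP. intro Hno.
  assert (Hc : forall t, 0 < t -> E (z t) = E (z 0)).
  { intros t Ht. apply Rle_antisym; [apply energy_le_initial; lra|].
    apply Rnot_lt_le. intro Hlt. apply Hno. exists t. split; [lra| exact Hlt]. }
  pose proof (trajectory_stationary Hc) as Hst.
  pose proof hz as [_ [_ [_ hnull]]].
  destruct (null_set_misses_interval _ 0 1 ltac:(lra) hnull) as [t [Ht Hgood]].
  assert (good_time t) as [v [Hder HS]].
  { apply NNPP. intro Hng. apply Hgood. split; [lra| exact Hng]. }
  assert (Hv : v = hzero).
  { apply (derivative_of_stationary H z t v); [lra| |exact Hder].
    intros s Hs. rewrite (Hst s), (Hst t) by lra. reflexivity. }
  apply Hz0. rewrite <- (Hst t) by lra. rewrite <- Hv. exact HS.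
Qed.

End Trajectory.

Theorem mainTheorem12
  (H : HilbertSpace) (C U : H -> Prop) (L : R)
  (j : H -> R) (gj : H -> H) (eta Leta : H -> R)
  (hCne : nonempty H C) (hCb : hbounded H C) (hCc : hconvex H C) (hCcl : hclosed H C)
  (hUo : hopen H U) (hUc : hconvex H U) (hCU : forall x, C x -> U x)
  (hj : C11 H U L j gj)
  (heta_cvx : convex_fun H eta) (heta_lsc : lsc H eta)
  (heta_loc : locally_lipschitz H eta) (heta_bb : bounded_below_on H C eta)
  (hLeta_b : bounded_on_bounded H Leta) (hLeta : slope_bound H eta Leta)
  (z : R -> H)
  (hz : strong_solution H C gj eta z)
  (hz0 : ~ S_set H C gj eta (z 0) hzero) :
  let phi := fun u => j u + eta u in
  exists T, T > 0 /\ exists s,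
    is_lub (fun y => exists t, 0 <= t <= T /\ y = phi (z t)) s /\
    phi (z T) < s /\ s <= phi (z 0).
Proof.
  intro phi.
  destruct (energy_lipschitz_on H C U j gj eta Leta hCU hCc L hCne hCb hj hLeta_b hLeta)
    as [K [hK hlip]].
  pose proof (energy_le_initial H C U j gj eta z K (proj1 hj) hCU hz hK hlip) as Hle.
  destruct (energy_drops H C U j gj eta z K (proj1 hj) hCU hz hK hlip hz0) as [T [HT Hdrop]].
  exists T. split; [exact HT|]. exists (phi (z 0)). split; [split|split; [exact Hdrop| apply Rle_refl]].
  - intros y [t [Ht ->]]. apply Hle. lra.
  - intros b Hb. apply Hb. exists 0. split; [lra| reflexivity].
Qed.
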